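(* Let $X$ be a non-empty set. The monoid $T_X^0$ is protomodal, and for every maximal right pre-reduced subset $E\subseteq E(T_X^0)$, $T_X^0$ is an inductive left $E$-monoid, integral with $0\in E$, and $(PT_X,\cdot,D)\cong Rest_0(E,T_X^0)$ as unary semigroups.
   Context: All maps are composed left to right: for (partial) maps $s,t$ on $X$, $st$ means apply $s$ first, then $t$. $PT_X$ is the monoid of partial functions $X\to X$ under this composition, with $D(s)$ the identity map on $\mathrm{dom}(s)$; it is a left restriction monoid. $T_X$ is the submonoid of total functions, and $T_X^0$ is $T_X$ with a new zero element $0$ adjoined. For a semigroup $S$, $E(S)$ is its set of idempotents and $Sf=\{uf\mid u\in S\}$; for $e,f\in E(S)$, $e\le_r f$ iff $e=ef$, and $e\sim_r f$ iff $e\le_r f$ and $f\le_r e$. $E\subseteq E(S)$ is right pre-reduced if $e=ef$ and $f=fe$ imply $e=f$ for $e,f\in E$, and maximal right pre-reduced if it contains exactly one element of each $\sim_r$-class of $E(S)$. $Eq(s,t)=\{u\in S\mid us=ut\}$. A monoid $S$ is protomodal if for every $e\in E(S)$ and $s\in S$, $Eq(s,se)$ is non-empty and equals $Sf$ for some $f\in E(S)$. A monoid with zero is integral if $st=0$ implies $s=0$ or $t=0$. Let $S$ be a monoid and $1\in E\subseteq E(S)$. $S$ is an inductive left $E$-monoid if $E$ is right pre-reduced, $(E,\le_r)$ is a meet-semilattice with meet $\wedge$, and (I1') for all $t\in S$, $e\in E$ there is $t\cdot e\in E$ such that for all $s\in S$: $ste=st$ iff $s(t\cdot e)=s$; (I2')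 for $s\in S$, $e,f\in E$: $se=sf=s$ implies $s(e\wedge f)=s$. If $S$ is also integral with zero and $0\in E$, $Rest_0(E,S)$ is the set $\{(e,s)\in E\times S\mid es=s,\ s=0\Rightarrow e=0\}$ with multiplication $(e,s)(f,t)=(e\wedge(s\cdot f),(e\wedge(s\cdot f))st)$ and $D((e,s))=(e,e)$. *)

Set Implicit Arguments.

(** * Generic notions for a monoid (S, mul, one), maps composed left to right *)
Section Generic.
Variable S : Type.
Variable mul : S -> S -> S.

Definition idem (e : S) : Prop := mul e e = e.

Definition le_r (e f : S) : Prop := e = mul e f.

Definition sim_r (e f : S) : Prop := le_r e f /\ le_r f e.

Definition right_pre_reduced (E : S -> Prop) : Prop :=
  forall e f, E e -> E f -> e = mul e f -> f = mul f e -> e = f.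

Definition max_right_pre_reduced (E : S -> Prop) : Prop :=
  (forall e, E e -> idem e) /\
  (forall e, idem e -> exists! f, E f /\ sim_r f e).

Definition in_Eq (s t u : S) : Prop := mul u s = mul u t.

Definition in_Sf (f u : S) : Prop := exists v, u = mul v f.

Definition protomodal : Prop :=
  forall (e s : S), idem e ->
    (exists u, in_Eq s (mul s e) u) /\
    (exists f, idem f /\ forall u, in_Eq s (mul s e) u <-> in_Sf f u).

Definition is_meet (E : S -> Prop) (e f g : S) : Prop :=
  E g /\ le_r g e /\ le_r g f /\
  (forall h, E h -> le_r h e -> le_r h f -> le_r h g).

Definition meet_semilattice (E : S -> Prop) : Prop :=
  (forall e, E e -> le_r e e) /\
  (forall e f, E e -> E f -> le_r e f -> le_r f e -> e = f) /\
  (forall e f g, E e -> E f -> E g -> le_r e f -> le_r f g -> le_r e g) /\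
  (forall e f, E e -> E f -> exists g, is_meet E e f g).

Definition is_dot (E : S -> Prop) (t e g : S) : Prop :=
  E g /\ forall s, mul (mul s t) e = mul s t <-> mul s g = s.

Definition inductive_left_E_monoid (one : S) (E : S -> Prop) : Prop :=
  E one /\
  (forall e, E e -> idem e) /\
  right_pre_reduced E /\
  meet_semilattice E /\
  (forall t e, E e -> exists g, is_dot E t e g) /\
  (forall s e f g, E e -> E f -> is_meet E e f g ->
     mul s e = s -> mul s f = s -> mul s g = s).

Definition integral (zero : S) : Prop :=
  forall s t, mul s t = zero -> s = zero \/ t = zero.

Definition rest0_carrier (zero : S) (E : S -> Prop) (p : S * S) : Prop :=
  E (fst p) /\ mul (fst p) (snd p) = snd p /\ (snd p = zero -> fst p = zero).

Definition rest0_mul (meet dot : S -> S -> S) (p q : S * S) : S * S :=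
  let g := meet (fst p) (dot (snd p) (fst q)) in
  (g, mul (mul g (snd p)) (snd q)).

Definition rest0_D (p : S * S) : S * S := (fst p, fst p).

End Generic.

(** T_X^0 : total functions X -> X with an adjoined zero (None) *)
Definition T0 (X : Type) : Type := option (X -> X).

Definition tmul (X : Type) (a b : T0 X) : T0 X :=
  match a, b with
  | Some f, Some g => Some (fun x => g (f x))
  | _, _ => None
  end.

Definition tone (X : Type) : T0 X := Some (fun x => x).

Definition tzero (X : Type) : T0 X := None.

Definition PT (X : Type) : Type := X -> option X.

Definition pmul (X : Type) (s t : PT X) : PT X :=
  fun x => match s x with Some y => t y | None => None end.

Definition pD (X : Type) (s : PT X) : PT X :=
  fun x => match s x with Some _ => Some x | None => None end.

From Stdlib Require Import Classical ClassicalEpsilon FunctionalExtensionality.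

(* Everything is governed by fixed-point sets.  For an idempotent e, the
   relation e <=_r f means Fix e ⊆ Fix f, and every subset of X is the
   fixed-point set of some idempotent (a retraction onto it, or 0 for ∅).
   Hence a maximal right pre-reduced E contains exactly one element with any
   prescribed fixed-point set; the meet in E is intersection of fixed-point
   sets, and t·e is the element fixing t^{-1}(Fix e).  Protomodality is the
   same computation: Eq(s, se) = T_X^0 f where Fix f = s^{-1}(Fix e).
   The isomorphism sends a partial map a to the pair (e, e;a) where e ∈ E has
   Fix e = dom a and e;a is a, extended arbitrarily off dom a; its inverse
   restricts s to Fix e. *)

Section FullTransformations.
Variable X : Type.

Lemma tmul_assoc (a b c : T0 X) : tmul a (tmul b c) = tmul (tmul a b) c.
Proof. destruct a, b, c; reflexivity. Qed.

Lemma tmul_SS (f g : X -> X) : tmul (Some f) (Some g) = Some (fun x => g (f x)).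
Proof. reflexivity. Qed.

Lemma tmul_integral : integral (@tmul X) (tzero X).
Proof. intros [s|] [t|]; simpl; auto; discriminate. Qed.

Definition fixed (e : T0 X) (y : X) : Prop :=
  match e with Some f => f y = y | None => False end.

Definition fixes_exactly (e : T0 X) (A : X -> Prop) : Prop :=
  forall y, fixed e y <-> A y.

Lemma idem_retraction {r : X -> X} :
  idem (@tmul X) (Some r) -> forall x, r (r x) = r x.
Proof.
  unfold idem; simpl. intros H x. injection H as H.
  exact (f_equal (fun f => f x) H).
Qed.

Lemma left_ideal_iff {f : T0 X} (u : T0 X) :
  idem (@tmul X) f -> ((exists v, u = tmul v f) <-> tmul u f = u).
Proof.
  intros Hf. split.
  - intros [v ->]. rewrite <- tmul_assoc. unfold idem in Hf. rewrite Hf. reflexivity.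
  - intros H. exists u. auto.
Qed.

Lemma idem_of_set (A : X -> Prop) :
  exists e, idem (@tmul X) e /\ fixes_exactly e A.
Proof.
  destruct (classic (exists y, A y)) as [[y0 Hy0]|Hempty].
  - exists (Some (fun x => if excluded_middle_informative (A x) then x else y0)).
    split.
    + unfold idem. rewrite tmul_SS. f_equal. extensionality x.
      destruct (excluded_middle_informative (A x)) as [Hx|Hx].
      * destruct (excluded_middle_informative (A x)); [reflexivity | contradiction].
      * destruct (excluded_middle_informative (A y0)); [reflexivity | contradiction].
    + intros y; simpl. destruct (excluded_middle_informative (A y)) as [Hy|Hy].
      * tauto.
      * split; [intros <-; contradiction | intros Hy'; contradiction].
  - exists None. split; [reflexivity|]. intros y; simpl.
    split; [tauto | intros Hy; apply Hempty; eauto].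
Qed.

Variable x0 : X.

Lemma absorbs_iff (k : X -> X) (g : T0 X) :
  tmul (Some k) g = Some k <-> forall x, fixed g (k x).
Proof.
  destruct g as [γ|]; simpl; split.
  - intros H x. injection H as H. exact (f_equal (fun f => f x) H).
  - intros H. f_equal. extensionality x. apply H.
  - discriminate.
  - intros H. destruct (H x0).
Qed.

Lemma absorbs_const (y : X) (g : T0 X) :
  tmul (Some (fun _ => y)) g = Some (fun _ => y) <-> fixed g y.
Proof.
  rewrite absorbs_iff. split; [intros H; exact (H x0) | intros H _; exact H].
Qed.

Lemma le_r_fixed {e : T0 X} (f : T0 X) :
  idem (@tmul X) e -> (le_r (@tmul X) e f <-> forall y, fixed e y -> fixed f y).
Proof.
  intros He. unfold le_r.
  destruct e as [ε|]; [|simpl; split; [intros _ y [] | reflexivity]].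
  pose proof (idem_retraction He) as Hε.
  destruct f as [φ|]; simpl.
  - split.
    + intros H y Hy. injection H as H.
      pose proof (f_equal (fun g => g y) H) as Hy'. simpl in Hy'. congruence.
    + intros H. f_equal. extensionality x. symmetry. exact (H _ (Hε x)).
  - split; [discriminate | intros H; destruct (H _ (Hε x0))].
Qed.

(* The points that t sends to fixed points of e; this is Fix(t·e). *)
Definition preimage (t e : T0 X) (y : X) : Prop :=
  match t with Some h => fixed e (h y) | None => True end.

Lemma dot_absorb {t e g : T0 X} :
  fixes_exactly g (preimage t e) ->
  forall s, tmul (tmul s t) e = tmul s t <-> tmul s g = s.
Proof.
  intros Hg [k|]; [|simpl; tauto].
  rewrite absorbs_iff. destruct t as [h|].
  - rewrite tmul_SS, absorbs_iff. split; intros H x.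
    + exact (proj2 (Hg (k x)) (H x)).
    + exact (proj1 (Hg (k x)) (H x)).
  - simpl. split; [intros _ x; apply Hg; exact I | reflexivity].
Qed.

(* Eq(s, se) = T f for an idempotent f fixing s^{-1}(Fix e). *)
Lemma tmul_protomodal : protomodal (@tmul X).
Proof.
  intros e s _. split; [exists None; reflexivity|].
  destruct (idem_of_set (preimage s e)) as [f [Hf Hfix]].
  exists f. split; [exact Hf|]. intros u. unfold in_Eq, in_Sf.
  rewrite tmul_assoc, (left_ideal_iff u Hf), <- (dot_absorb Hfix u).
  split; intros H; symmetry; exact H.
Qed.

Definition dom (a : PT X) (y : X) : Prop := exists z, a y = Some z.

Lemma dom_pD (a : PT X) (y : X) : dom (pD a) y <-> dom a y.
Proof.
  unfold dom, pD. destruct (a y); split; intros [z H]; try discriminate; eauto.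
Qed.

(* The total map e;a: the retraction e followed by a, sent to the chosen
   point x0 where a is undefined. *)
Definition restrict (a : PT X) (e : T0 X) : T0 X :=
  match e with
  | Some r => Some (fun x => match a (r x) with Some z => z | None => x0 end)
  | None => None
  end.

(* The partial map s restricted to Fix e, inverse to restrict. *)
Definition pt_of (p : T0 X * T0 X) : PT X :=
  fun y =>
    match p with
    | (Some r, Some s) =>
        if excluded_middle_informative (r y = y) then Some (s y) else None
    | _ => None
    end.

Lemma restrict_idem_left (a : PT X) {e : T0 X} :
  idem (@tmul X) e -> tmul e (restrict a e) = restrict a e.
Proof.
  destruct e as [r|]; [|reflexivity]. intros He.
  unfold restrict. rewrite tmul_SS. f_equal. extensionality x.
  rewrite (idem_retraction He x). reflexivity.
Qed.

Lemma pt_of_restrict (a : PT X) (e : T0 X) :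
  fixes_exactly e (dom a) -> pt_of (e, restrict a e) = a.
Proof.
  intros Hdom. extensionality y. destruct e as [r|]; simpl.
  - destruct (excluded_middle_informative (r y = y)) as [Hy|Hy].
    + rewrite Hy. destruct (proj1 (Hdom y) Hy) as [z Hz]. rewrite Hz. reflexivity.
    + destruct (a y) as [z|] eqn:Hz; [|reflexivity].
      exfalso. apply Hy, Hdom. exists z. exact Hz.
  - destruct (a y) as [z|] eqn:Hz; [|reflexivity].
    destruct (proj2 (Hdom y) (ex_intro _ z Hz)).
Qed.

Lemma dom_pt_of {e s : T0 X} :
  rest0_carrier (@tmul X) (tzero X) (idem (@tmul X)) (e, s) ->
  fixes_exactly e (dom (pt_of (e, s))).
Proof.
  intros Hpair. destruct Hpair as [_ [Hes Hzero]]; simpl in *. intros y.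
  destruct e as [r|]; [|simpl in Hes; subst s; split; [intros [] | intros [z Hz]; discriminate]].
  destruct s as [σ|]; [|discriminate (Hzero eq_refl)].
  unfold dom; simpl. destruct (excluded_middle_informative (r y = y)) as [Hy|Hy].
  - split; eauto.
  - split; [intros H; contradiction | intros [z Hz]; discriminate].
Qed.

Lemma restrict_pt_of {e s : T0 X} :
  rest0_carrier (@tmul X) (tzero X) (idem (@tmul X)) (e, s) ->
  restrict (pt_of (e, s)) e = s.
Proof.
  intros Hpair. destruct Hpair as [He [Hes Hzero]]; simpl in *.
  destruct e as [r|]; [|simpl in Hes; subst s; reflexivity].
  destruct s as [σ|]; [|discriminate (Hzero eq_refl)].
  rewrite tmul_SS in Hes. injection Hes as Hes.
  simpl. f_equal. extensionality x.
  destruct (excluded_middle_informative (r (r x) = r x)) as [_|Hx].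
  - exact (f_equal (fun f => f x) Hes).
  - exfalso. exact (Hx (idem_retraction He x)).
Qed.

(* dom(a;b) = dom a ∩ a^{-1}(dom b), expressed through representing
   idempotents. *)
Lemma dom_pmul {a b : PT X} {ea eb : T0 X} :
  fixes_exactly ea (dom a) -> fixes_exactly eb (dom b) ->
  forall y, fixed ea y /\ preimage (restrict a ea) eb y <-> dom (pmul a b) y.
Proof.
  intros Ma Mb y. unfold dom, pmul. destruct ea as [r|]; simpl.
  - split.
    + intros [Hr Hb]. destruct (proj1 (Ma y) Hr) as [z Hz].
      rewrite Hr, Hz in Hb. rewrite Hz. exact (proj1 (Mb z) Hb).
    + intros [w Hw]. destruct (a y) as [z|] eqn:Hz; [|discriminate].
      assert (Hr : r y = y) by (apply Ma; exists z; exact Hz).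
      split; [exact Hr|]. rewrite Hr, Hz. apply Mb. exists w. exact Hw.
  - split; [tauto|]. intros [w Hw]. destruct (a y) as [z|] eqn:Hz; [|discriminate].
    destruct (proj2 (Ma y) (ex_intro _ z Hz)).
Qed.

(* The second component of a product: with Fix g = dom(a;b),
   g;(a;b) = g (ea;a) (eb;b). *)
Lemma restrict_pmul {a b : PT X} {ea eb g : T0 X} :
  idem (@tmul X) g -> fixes_exactly ea (dom a) -> fixes_exactly eb (dom b) ->
  fixes_exactly g (dom (pmul a b)) ->
  restrict (pmul a b) g = tmul (tmul g (restrict a ea)) (restrict b eb).
Proof.
  intros Hg Ma Mb Mab. destruct g as [r|]; [|reflexivity].
  assert (Hx : forall x, exists z w, a (r x) = Some z /\ b z = Some w).
  { intros x. destruct (proj1 (Mab (r x)) (idem_retraction Hg x)) as [w Hw].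
    unfold pmul in Hw. destruct (a (r x)) as [z|]; [eauto | discriminate]. }
  destruct (Hx x0) as [z0 [w0 [Hz0 Hw0]]].
  destruct ea as [ra|]; [|destruct (proj2 (Ma (r x0)) (ex_intro _ z0 Hz0))].
  destruct eb as [rb|]; [|destruct (proj2 (Mb z0) (ex_intro _ w0 Hw0))].
  simpl. f_equal. extensionality x. destruct (Hx x) as [z [w [Hz Hw]]].
  assert (Hra : ra (r x) = r x) by (apply Ma; exists z; exact Hz).
  assert (Hrb : rb z = z) by (apply Mb; exists w; exact Hw).
  unfold pmul. rewrite Hra, Hz, Hrb, Hw. reflexivity.
Qed.

Lemma restrict_pD {a : PT X} {e : T0 X} :
  idem (@tmul X) e -> fixes_exactly e (dom a) -> restrict (pD a) e = e.
Proof.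
  intros He Ma. destruct e as [r|]; [|reflexivity].
  simpl. f_equal. extensionality x.
  destruct (proj1 (Ma (r x)) (idem_retraction He x)) as [z Hz].
  unfold pD. rewrite Hz. reflexivity.
Qed.

Section MaxRightPreReduced.
Variable E : T0 X -> Prop.
Hypothesis HE : max_right_pre_reduced (@tmul X) E.

Lemma E_idem {e : T0 X} : E e -> idem (@tmul X) e.
Proof. exact (proj1 HE e). Qed.

Lemma le_r_E {e : T0 X} (f : T0 X) :
  E e -> (le_r (@tmul X) e f <-> forall y, fixed e y -> fixed f y).
Proof. intros He. exact (le_r_fixed f (E_idem He)). Qed.

(* Two ~r-related elements of E represent the same class, so coincide. *)
Lemma E_right_pre_reduced : right_pre_reduced (@tmul X) E.
Proof.
  intros e f He Hf Hef Hfe.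
  destruct (proj2 HE f (E_idem Hf)) as [g [_ Huniq]].
  transitivity g; [symmetry|]; apply Huniq.
  - split; [exact He | split; assumption].
  - split; [exact Hf | split; exact (eq_sym (E_idem Hf))].
Qed.

Lemma E_ext (e f : T0 X) :
  E e -> E f -> (forall y, fixed e y <-> fixed f y) -> e = f.
Proof.
  intros He Hf H. apply E_right_pre_reduced; auto.
  - apply (le_r_E f He). intros y. apply H.
  - apply (le_r_E e Hf). intros y. apply H.
Qed.

Lemma E_exists (A : X -> Prop) : exists e, E e /\ fixes_exactly e A.
Proof.
  destruct (idem_of_set A) as [i [Hi HiA]].
  destruct (proj2 HE i Hi) as [e [[He [Hei Hie]] _]].
  exists e. split; [exact He|]. intros y. split; intros Hy.
  - apply HiA. exact (proj1 (le_r_E i He) Hei y Hy).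
  - exact (proj1 (le_r_fixed e Hi) Hie y (proj2 (HiA y) Hy)).
Qed.

(* The ~r-class of 1 is {1}, so 1 ∈ E; likewise the class of 0 is {0}. *)
Lemma E_one : E (tone X).
Proof.
  destruct (proj2 HE (tone X) eq_refl) as [f [[Hf [_ Hone]] _]].
  unfold le_r in Hone. destruct f as [φ|]; simpl in Hone; [|discriminate].
  rewrite Hone. exact Hf.
Qed.

Lemma E_zero : E (tzero X).
Proof.
  destruct (proj2 HE (tzero X) eq_refl) as [f [[Hf [Hzero _]] _]].
  unfold le_r in Hzero. destruct f; simpl in Hzero; [discriminate | exact Hf].
Qed.

Lemma is_meet_fixed {e f g : T0 X} : E e -> E f -> E g ->
  (is_meet (@tmul X) E e f g <-> fixes_exactly g (fun y => fixed e y /\ fixed f y)).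
Proof.
  intros He Hf Hg. split.
  - intros [_ [Hge [Hgf Hmax]]] y. split.
    + intros Hy. split; [exact (proj1 (le_r_E e Hg) Hge y Hy) | exact (proj1 (le_r_E f Hg) Hgf y Hy)].
    + intros Hy. destruct (E_exists (fun y => fixed e y /\ fixed f y)) as [m [Hm HmA]].
      assert (Hme : le_r (@tmul X) m e) by (apply (le_r_E e Hm); intros z Hz; apply HmA, Hz).
      assert (Hmf : le_r (@tmul X) m f) by (apply (le_r_E f Hm); intros z Hz; apply HmA, Hz).
      exact (proj1 (le_r_E g Hm) (Hmax m Hm Hme Hmf) y (proj2 (HmA y) Hy)).
  - intros Hfix. split; [exact Hg|]. split; [|split].
    + apply (le_r_E e Hg). intros y Hy. apply Hfix, Hy.
    + apply (le_r_E f Hg). intros y Hy. apply Hfix, Hy.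
    + intros h Hh Hhe Hhf. apply (le_r_E g Hh). intros y Hy. apply Hfix.
      split; [exact (proj1 (le_r_E e Hh) Hhe y Hy) | exact (proj1 (le_r_E f Hh) Hhf y Hy)].
Qed.

(* t·e is the element of E fixing exactly t^{-1}(Fix e); the "only if"
   direction tests (I1') against the constant maps. *)
Lemma is_dot_fixed {t e g : T0 X} : E g ->
  (is_dot (@tmul X) E t e g <-> fixes_exactly g (preimage t e)).
Proof.
  intros Hg. split.
  - intros [_ Habs] y. rewrite <- absorbs_const, <- Habs.
    destruct t as [h|].
    + rewrite tmul_SS. exact (absorbs_const (h y) e).
    + simpl. tauto.
  - intros Hfix. split; [exact Hg | exact (dot_absorb Hfix)].
Qed.

Lemma E_meet_semilattice : meet_semilattice (@tmul X) E.
Proof.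
  split; [|split; [|split]].
  - intros e He. exact (eq_sym (E_idem He)).
  - intros e f He Hf. exact (E_right_pre_reduced _ _ He Hf).
  - intros e f g _ _ _ Hef Hfg. unfold le_r in *.
    rewrite Hef at 1. rewrite Hfg, tmul_assoc, <- Hef. reflexivity.
  - intros e f He Hf.
    destruct (E_exists (fun y => fixed e y /\ fixed f y)) as [m [Hm HmA]].
    exists m. apply is_meet_fixed; auto.
Qed.

(* (I1') via is_dot_fixed; (I2') because the image of s lies in
   Fix e ∩ Fix f = Fix(e ∧ f). *)
Lemma tmul_inductive : inductive_left_E_monoid (@tmul X) (tone X) E.
Proof.
  split; [exact E_one|]. split; [exact (proj1 HE)|].
  split; [exact E_right_pre_reduced|]. split; [exact E_meet_semilattice|]. split.
  - intros t e _. destruct (E_exists (preimage t e)) as [g [Hg Hfix]].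
    exists g. apply is_dot_fixed; auto.
  - intros [k|] e f g He Hf Hmeet Hse Hsf; [|reflexivity].
    assert (Hg : E g) by apply Hmeet.
    rewrite absorbs_iff in *. intros x.
    apply (is_meet_fixed He Hf Hg) in Hmeet. apply Hmeet. auto.
Qed.

Definition rep (A : X -> Prop) : T0 X :=
  proj1_sig (constructive_indefinite_description _ (E_exists A)).

Lemma rep_spec (A : X -> Prop) : E (rep A) /\ fixes_exactly (rep A) A.
Proof. exact (proj2_sig (constructive_indefinite_description _ (E_exists A))). Qed.

Lemma rep_unique {A : X -> Prop} {e : T0 X} : E e -> fixes_exactly e A -> rep A = e.
Proof.
  intros He HeA. destruct (rep_spec A) as [Hr HrA].
  apply E_ext; auto. intros y. rewrite (HrA y), (HeA y). reflexivity.
Qed.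

(* The isomorphism PT_X -> Rest_0(E, T_X^0). *)
Definition rest_of (a : PT X) : T0 X * T0 X :=
  (rep (dom a), restrict a (rep (dom a))).

Lemma rest_of_carrier (a : PT X) : rest0_carrier (@tmul X) (tzero X) E (rest_of a).
Proof.
  destruct (rep_spec (dom a)) as [Ea _]. unfold rest_of, rest0_carrier; simpl.
  split; [exact Ea|]. split; [exact (restrict_idem_left a (E_idem Ea))|].
  destruct (rep (dom a)); [discriminate | reflexivity].
Qed.

Lemma pt_of_rest_of (a : PT X) : pt_of (rest_of a) = a.
Proof. apply pt_of_restrict, rep_spec. Qed.

Lemma rest_of_pt_of (p : T0 X * T0 X) :
  rest0_carrier (@tmul X) (tzero X) E p -> rest_of (pt_of p) = p.
Proof.
  destruct p as [e s]. intros Hp. assert (He : E e) by apply Hp.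
  assert (Hpair : rest0_carrier (@tmul X) (tzero X) (idem (@tmul X)) (e, s))
    by exact (conj (E_idem He) (proj2 Hp)).
  unfold rest_of. rewrite (rep_unique He (dom_pt_of Hpair)).
  rewrite (restrict_pt_of Hpair). reflexivity.
Qed.

(* rest_of is multiplicative: the first component of the Rest_0 product
   fixes dom a ∩ a^{-1}(dom b) = dom(a;b). *)
Lemma rest_of_pmul (meet dot : T0 X -> T0 X -> T0 X) :
  (forall e f, E e -> E f -> is_meet (@tmul X) E e f (meet e f)) ->
  (forall t e, E e -> is_dot (@tmul X) E t e (dot t e)) ->
  forall a b, rest_of (pmul a b) = rest0_mul (@tmul X) meet dot (rest_of a) (rest_of b).
Proof.
  intros Hmeet Hdot a b.
  destruct (rep_spec (dom a)) as [Ea Ma]. destruct (rep_spec (dom b)) as [Eb Mb].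
  unfold rest0_mul, rest_of; cbn [fst snd].
  set (ea := rep (dom a)) in *. set (eb := rep (dom b)) in *.
  set (d := dot (restrict a ea) eb).
  assert (Hd : is_dot (@tmul X) E (restrict a ea) eb d) by exact (Hdot _ _ Eb).
  assert (Ed : E d) by apply Hd.
  assert (Hg : is_meet (@tmul X) E ea d (meet ea d)) by exact (Hmeet _ _ Ea Ed).
  assert (Eg : E (meet ea d)) by apply Hg.
  assert (Mg : fixes_exactly (meet ea d) (dom (pmul a b))).
  { intros y. rewrite (proj1 (is_meet_fixed Ea Ed Eg) Hg y).
    rewrite (proj1 (is_dot_fixed Ed) Hd y). exact (dom_pmul Ma Mb y). }
  rewrite (rep_unique Eg Mg). f_equal.
  exact (restrict_pmul (E_idem Eg) Ma Mb Mg).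
Qed.

Lemma rest_of_pD (a : PT X) : rest_of (pD a) = rest0_D (rest_of a).
Proof.
  destruct (rep_spec (dom a)) as [Ea Ma].
  assert (Hdom : rep (dom (pD a)) = rep (dom a)).
  { apply rep_unique; [exact Ea|]. intros y. rewrite (Ma y). symmetry. apply dom_pD. }
  unfold rest_of, rest0_D; simpl. rewrite Hdom, (restrict_pD (E_idem Ea) Ma).
  reflexivity.
Qed.

End MaxRightPreReduced.
End FullTransformations.

Theorem theorem7p1 (X : Type) (HX : inhabited X) :
  protomodal (@tmul X) /\
  forall E : T0 X -> Prop,
    max_right_pre_reduced (@tmul X) E ->
    inductive_left_E_monoid (@tmul X) (tone X) E /\
    integral (@tmul X) (tzero X) /\
    E (tzero X) /\
    (forall meet dot : T0 X -> T0 X -> T0 X,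
       (forall e f, E e -> E f -> is_meet (@tmul X) E e f (meet e f)) ->
       (forall t e, E e -> is_dot (@tmul X) E t e (dot t e)) ->
       exists phi : PT X -> T0 X * T0 X,
         (forall a, rest0_carrier (@tmul X) (tzero X) E (phi a)) /\
         (forall a b, phi a = phi b -> a = b) /\
         (forall p, rest0_carrier (@tmul X) (tzero X) E p -> exists a, phi a = p) /\
         (forall a b, phi (pmul a b) = rest0_mul (@tmul X) meet dot (phi a) (phi b)) /\
         (forall a, phi (pD a) = rest0_D (phi a))).
Proof.
  destruct HX as [x0]. split; [exact (tmul_protomodal X x0)|].
  intros E HE. split; [exact (tmul_inductive X x0 E HE)|].
  split; [exact (tmul_integral X)|]. split; [exact (E_zero X E HE)|].
  intros meet dot Hmeet Hdot. exists (rest_of X x0 E HE).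
  split; [exact (rest_of_carrier X x0 E HE)|]. split.
  - intros a b Hab.
    rewrite <- (pt_of_rest_of X x0 E HE a), <- (pt_of_rest_of X x0 E HE b), Hab.
    reflexivity.
  - split; [intros p Hp; exists (pt_of X p); exact (rest_of_pt_of X x0 E HE p Hp)|].
    split; [exact (rest_of_pmul X x0 E HE meet dot Hmeet Hdot) | exact (rest_of_pD X x0 E HE)].
Qed.
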